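(* Let $R$ be a commutative ring with identity, let $(S,\leq)$ be a strictly ordered monoid, and let $w\in S$. Let $P_w:[[R^{S,\leq}]]\to[[R^{S,\leq}]]$ be the cut-off operator at $w$, given by $P_w(f)(s)=f(s)$ if $s<w$ and $P_w(f)(s)=0$ if $s\not<w$. Set $$A_w=\{(u,v)\in S\times S: u\not<w,\ v\not<w,\ u+v<w\},\qquad B_w=\{(u,v)\in S\times S: u<w,\ v<w,\ u+v\not<w\}.$$ Then $([[R^{S,\leq}]],P_w)$ is a Rota-Baxter algebra (of weight $-1$) if and only if $A_w=\emptyset$ and $B_w=\emptyset$.
   Context: All monoids are commutative and written additively with neutral element $0$. A partially ordered set is artinian if every strictly decreasing sequence is finite, and narrow if every subset of pairwise incomparable elements is finite. A strictly ordered monoid is a commutative monoid $S$ with a partial order $\leq$ such that $s<s'$ implies $s+t<s'+t$ for all $s,s',t\in S$. The ring of generalized power series $[[R^{S,\leq}]]$ is the set of maps $f:S\to R$ with artinian and narrow support $\{s: f(s)\neq 0\}$, with pointwise addition and convolution $(fg)(s)=\sum f(u)g(v)$ over the finitely many pairs $(u,v)$ with $u+v=s$, $f(u)\neq0$, $g(v)\neq0$. A Rota-Baxter algebra (of weight $-1$) is an associative $R$-algebra $A$ with an $R$-linear $P:A\to A$ satisfying $P(x)P(y)=P(xP(y))+P(P(x)y)-P(xy)$ for all $x,y\in A$. *)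

From Stdlib Require Import List ClassicalEpsilon.
From HB Require Import structures.
From mathcomp Require Import all_boot all_algebra.
Set Implicit Arguments. Unset Strict Implicit. Unset Printing Implicit Defensive.
Import GRing.Theory.
Local Open Scope ring_scope.

Section GPS.
Variables (S : Type) (add : S -> S -> S) (zero : S) (le : S -> S -> Prop).

Definition slt (s t : S) : Prop := le s t /\ s <> t.

Definition strictly_ordered_monoid : Prop :=
  (forall a b c, add a (add b c) = add (add a b) c) /\
  (forall a b, add a b = add b a) /\
  (forall a, add zero a = a) /\
  (forall a, le a a) /\
  (forall a b, le a b -> le b a -> a = b) /\
  (forall a b c, le a b -> le b c -> le a c) /\
  (forall s s' t, slt s s' -> slt (add s t) (add s' t)).

Definition finite_subset (A : S -> Prop) : Prop :=
  exists l : list S, forall x, A x -> In x l.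

Definition artinian (A : S -> Prop) : Prop :=
  ~ exists u : nat -> S, forall n, A (u n) /\ slt (u n.+1) (u n).

Definition narrow (A : S -> Prop) : Prop :=
  forall B : S -> Prop, (forall x, B x -> A x) ->
    (forall x y, B x -> B y -> x <> y -> ~ le x y /\ ~ le y x) ->
    finite_subset B.

Variable R : comNzRingType.

Definition support (f : S -> R) : S -> Prop := fun s => f s <> 0.

Definition gps (f : S -> R) : Prop := artinian (support f) /\ narrow (support f).

Definition pairs_of (f g : S -> R) (s : S) (p : S * S) : Prop :=
  add p.1 p.2 = s /\ f p.1 <> 0 /\ g p.2 <> 0.

(* convolution: sum over the (finitely many) pairs (u,v) with u+v=s,
   f u <> 0, g v <> 0; enumerated by any duplicate-free list (the choice of
   enumeration does not matter). Defaults to 0 if no finite enumeration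
   exists, which never happens for f, g in gps. *)
Definition gps_mul (f g : S -> R) (s : S) : R :=
  match excluded_middle_informative
          (exists l : list (S * S), NoDup l /\ forall p, In p l <-> pairs_of f g s p)
  with
  | left H => \sum_(p <- proj1_sig (constructive_indefinite_description _ H))
                 f p.1 * g p.2
  | right _ => 0
  end.

Definition gps_add (f g : S -> R) : S -> R := fun s => f s + g s.
Definition gps_opp (f : S -> R) : S -> R := fun s => - f s.
Definition gps_scale (a : R) (f : S -> R) : S -> R := fun s => a * f s.

Definition cutoff (w : S) (f : S -> R) : S -> R :=
  fun s => if excluded_middle_informative (slt s w) then f s else 0.

Definition rota_baxter_gps (P : (S -> R) -> S -> R) : Prop :=
  [/\ (forall f, gps f -> gps (P f)),
      (forall (a b : R) f g, gps f -> gps g ->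
         P (gps_add (gps_scale a f) (gps_scale b g))
         = gps_add (gps_scale a (P f)) (gps_scale b (P g))) &
      (forall f g, gps f -> gps g ->
         gps_mul (P f) (P g)
         = gps_add (gps_add (P (gps_mul f (P g))) (P (gps_mul (P f) g)))
                   (gps_opp (P (gps_mul f g))))].

End GPS.

(* A cut-off P = P_w multiplies a series pointwise by the indicator c of
   {s | s < w}.  Expanding both sides of the Rota-Baxter identity at s over the
   pairs (u, v) with u + v = s turns it into the termwise relation
   c u * c v = c (u + v) * (c u + c v - 1), which is necessary (test it on
   monomials e_u, e_v) and sufficient.  Over {0, 1} this relation fails
   exactly on A_w (where it reads 0 = -1) and on B_w (where it reads 1 = 0).
   Comparing the two sums requires a common finite enumeration of the pairs,
   which exists because supports are artinian and narrow, hence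
   well-quasi-ordered, and the order is strictly compatible with addition. *)

From Stdlib Require Import List Permutation Classical ClassicalEpsilon FunctionalExtensionality Lia.
From mathcomp Require Import all_boot all_algebra ring.
Set Implicit Arguments. Unset Strict Implicit. Unset Printing Implicit Defensive.
Import GRing.Theory.

Lemma increasing_chain (Q : nat -> Prop) (Rl : nat -> nat -> Prop) :
  (exists i, Q i) -> (forall i, Q i -> exists j, (i < j)%N /\ Q j /\ Rl i j) ->
  exists phi : nat -> nat, forall n,
    (phi n < phi n.+1)%N /\ Q (phi n) /\ Rl (phi n) (phi n.+1).
Proof.
move=> [i0 Qi0] Hstep.
have Hnext i : exists j, Q i -> (i < j)%N /\ Q j /\ Rl i j.
  by case: (classic (Q i)) => [/Hstep[j Hj]|nQi]; [exists j | exists 0%N].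
pose next i := proj1_sig (constructive_indefinite_description _ (Hnext i)).
have nextP i : Q i -> (i < next i)%N /\ Q (next i) /\ Rl i (next i).
  by rewrite /next; case: constructive_indefinite_description.
pose phi n := iter n next i0.
have Qphi n : Q (phi n) by elim: n => [|n IHn] //; case: (nextP _ IHn) => _ [].
exists phi => n; have [lt_next [_ R_next]] := nextP _ (Qphi n).
by rewrite /phi iterS; split; [exact: lt_next | split; [exact: Qphi | exact: R_next]].
Qed.

Lemma chain_or_terminal_subseq (Rl : nat -> nat -> Prop) :
  (exists phi : nat -> nat, forall n,
     (phi n < phi n.+1)%N /\ Rl (phi n) (phi n.+1)) \/
  (exists phi : nat -> nat, forall n,
     (phi n < phi n.+1)%N /\ forall j, (phi n < j)%N -> ~ Rl (phi n) j).
Proof.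
case: (classic (exists N, forall i, (N <= i)%N -> exists j, (i < j)%N /\ Rl i j)).
  move=> [N HN]; left.
  have [|i Ni|phi Hphi] := @increasing_chain (fun i => (N <= i)%N) Rl.
  - by exists N.
  - have [j [ij Rij]] := HN i Ni; exists j.
    by split; [|split; [exact: leq_trans Ni (ltnW ij)|]].
  - by exists phi => n; have [? [_ ?]] := Hphi n.
move=> Hno; right.
have Hterm N : exists i, (N <= i)%N /\ forall j, (i < j)%N -> ~ Rl i j.
  apply: NNPP => Hnot; apply: Hno; exists N => i Ni.
  apply: NNPP => Hi; apply: Hnot; exists i; split=> // j ij Rij.
  by apply: Hi; exists j.
have [i0 [_ Hi0]] := Hterm 0%N.
have [|i _|phi Hphi] :=
  @increasing_chain (fun i => forall j, (i < j)%N -> ~ Rl i j) (fun _ _ => True).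
- by exists i0.
- by have [j [ij Hj]] := Hterm i.+1; exists j.
- by exists phi => n; have [? [? _]] := Hphi n.
Qed.

Lemma injective_seq_not_finite (T : Type) (y : nat -> T) :
  injective y -> ~ finite_subset (fun t => exists n, t = y n).
Proof.
move=> y_inj [l Hl].
have nd : NoDup (List.map y (List.seq 0 (length l).+1)).
  exact: FinFun.Injective_map_NoDup y_inj (seq_NoDup _ _).
have sub : incl (List.map y (List.seq 0 (length l).+1)) l.
  by move=> t /in_map_iff [n [<- _]]; apply: Hl; exists n.
by have := NoDup_incl_length nd sub; rewrite length_map length_seq; lia.
Qed.

Lemma not_finite_injective_seq (T : Type) (P : T -> Prop) :
  ~ finite_subset P -> exists y : nat -> T, (forall n, P (y n)) /\ injective y.
Proof.
move=> Hinf.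
have Hfresh l : exists x, P x /\ ~ In x l.
  apply: NNPP => Hno; apply: Hinf; exists l => x Px.
  by apply: NNPP => nx; apply: Hno; exists x.
pose fresh l := proj1_sig (constructive_indefinite_description _ (Hfresh l)).
have freshP l : P (fresh l) /\ ~ In (fresh l) l.
  by rewrite /fresh; case: constructive_indefinite_description.
pose fix prefix n := if n is k.+1 then fresh (prefix k) :: prefix k else nil.
have in_prefix m n : (m < n)%N -> In (fresh (prefix m)) (prefix n).
  elim: n => [//|n IHn]; rewrite ltnS leq_eqVlt => /orP[/eqP->|/IHn]; by [left | right].
exists (fun n => fresh (prefix n)); split=> [n|n m eq_nm].
  by case: (freshP (prefix n)).
case: (ltngtP n m) => // [nm|mn]; exfalso.
- by case: (freshP (prefix m)) => _ []; rewrite -eq_nm; apply: in_prefix.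
- by case: (freshP (prefix n)) => _ []; rewrite eq_nm; apply: in_prefix.
Qed.

Lemma finite_subset_enum (T : Type) (P : T -> Prop) :
  finite_subset P -> exists l, NoDup l /\ forall x, In x l <-> P x.
Proof.
move=> [l Hl].
pose decT x y := excluded_middle_informative (x = y :> T).
pose Pb x := if excluded_middle_informative (P x) then true else false.
exists (nodup decT (List.filter Pb l)); split; first exact: NoDup_nodup.
move=> x; rewrite nodup_In filter_In /Pb.
case: excluded_middle_informative => Px; split=> [[]|] //.
by move=> _; split=> //; apply: Hl.
Qed.

Section ArtinianNarrow.
Variables (S : Type) (le : S -> S -> Prop).
Hypothesis le_refl : forall a, le a a.

(* Artinian and narrow subsets are well-quasi-ordered: a sequence without a
   nondecreasing subsequence yields either an infinite descending chain or
   an infinite antichain. *)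
Lemma artinian_narrow_nondecreasing_subseq (A : S -> Prop) (x : nat -> S) :
  artinian le A -> narrow le A -> (forall n, A (x n)) ->
  exists phi : nat -> nat, forall n,
    (phi n < phi n.+1)%N /\ le (x (phi n)) (x (phi n.+1)).
Proof.
move=> A_art A_narrow Ax.
case: (chain_or_terminal_subseq (fun i j => le (x i) (x j))) => [//|[phi Hphi]].
pose z n := x (phi n).
have phi_mono := homo_ltn ltn_trans (fun n => proj1 (Hphi n)).
have z_nle k l : (k < l)%N -> ~ le (z k) (z l).
  by move=> kl; apply: (proj2 (Hphi k)); apply: phi_mono.
case: (chain_or_terminal_subseq (fun k l => slt le (z l) (z k))).
  move=> [psi Hpsi]; exfalso; apply: A_art; exists (fun n => z (psi n)) => n.
  by split; [apply: Ax | case: (Hpsi n)].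
move=> [psi Hpsi].
pose t n := z (psi n).
have psi_mono := homo_ltn ltn_trans (fun n => proj1 (Hpsi n)).
have t_incomparable a b : (a < b)%N -> ~ le (t a) (t b) /\ ~ le (t b) (t a).
  move=> ab; have t_nle := z_nle _ _ (psi_mono _ _ ab); split=> // tba.
  apply: (proj2 (Hpsi a) (psi b) (psi_mono _ _ ab)); split=> // eq_t.
  by apply: t_nle; rewrite /t eq_t.
have t_inj : injective t.
  move=> a b eq_t; case: (ltngtP a b) => // [ab|ba]; exfalso.
  - by apply: (proj1 (t_incomparable _ _ ab)); rewrite eq_t.
  - by apply: (proj1 (t_incomparable _ _ ba)); rewrite eq_t.
exfalso; apply: (injective_seq_not_finite t_inj); apply: A_narrow.
  by move=> _ [n ->]; apply: Ax.
move=> _ _ [a ->] [b ->] neq_t; case: (ltngtP a b) => [ab|ba|eq_ab].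
- exact: t_incomparable.
- by have [? ?] := t_incomparable _ _ ba.
- by rewrite eq_ab in neq_t.
Qed.

End ArtinianNarrow.

Section StrictlyOrderedMonoid.
Variables (S : Type) (add : S -> S -> S) (zero : S) (le : S -> S -> Prop).
Hypothesis HS : strictly_ordered_monoid add zero le.

Lemma slt_trans a b c : slt le a b -> slt le b c -> slt le a c.
Proof.
case: (HS) => _ [_ [_ [_ [le_anti [le_trans _]]]]] [ab neq_ab] [bc neq_bc].
split; first exact: le_trans ab bc.
by move=> eq_ac; apply: neq_ab; apply: (le_anti _ _ ab); rewrite eq_ac.
Qed.

Lemma slt_add u v u' v' : le u u' -> le v v' -> (u, v) <> (u', v') ->
  slt le (add u v) (add u' v').
Proof.
case: (HS) => _ [addC [_ [_ [_ [_ slt_addr]]]]] uu' vv' neq.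
have slt_addl a b c : slt le b c -> slt le (add a b) (add a c).
  by move=> bc; rewrite !(addC a); apply: slt_addr.
case: (classic (u = u')) => [eq_u|neq_u].
  rewrite -eq_u in neq *.
  by apply: slt_addl; split=> // eq_v; apply: neq; rewrite eq_v.
case: (classic (v = v')) => [<-|neq_v]; first exact: slt_addr.
by apply: (slt_trans (slt_addr _ _ _ (conj uu' neq_u))); apply: slt_addl.
Qed.

Variable R : comNzRingType.

(* The sum s cannot be attained by two coordinatewise comparable pairs in the
   supports, and by well-quasi-ordering any infinite family of pairs contains
   such a comparable couple. *)
Lemma pairs_of_finite (f g : S -> R) s : gps le f -> gps le g ->
  finite_subset (pairs_of add f g s).
Proof.
case: (HS) => _ [_ [_ [le_refl [_ [le_trans _]]]]] [f_art f_nar] [g_art g_nar].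
apply: NNPP => /not_finite_injective_seq [y [y_pairs y_inj]].
have [phi Hphi] := artinian_narrow_nondecreasing_subseq le_refl
  (x := fun n => (y n).1) f_art f_nar (fun n => proj1 (proj2 (y_pairs n))).
have [psi Hpsi] := artinian_narrow_nondecreasing_subseq le_refl
  (x := fun n => (y (phi n)).2) g_art g_nar
  (fun n => proj2 (proj2 (y_pairs (phi n)))).
set a := phi (psi 0%N); set b := phi (psi 1%N).
have le_fst : le (y a).1 (y b).1.
  apply: (homo_leq (f := fun n => (y (phi n)).1) le_refl
           (fun b a c => le_trans a b c) (fun n => proj2 (Hphi n))).
  exact: ltnW (proj1 (Hpsi 0%N)).
have lt_ab : (a < b)%N.
  exact: homo_ltn ltn_trans (fun n => proj1 (Hphi n)) _ _ (proj1 (Hpsi 0%N)).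
have neq_ab : y a <> y b by move=> /y_inj eq_ab; rewrite eq_ab ltnn in lt_ab.
have := slt_add le_fst (proj2 (Hpsi 0%N)).
rewrite -!surjective_pairing (proj1 (y_pairs a)) (proj1 (y_pairs b)).
by case/(_ neq_ab).
Qed.

End StrictlyOrderedMonoid.

Local Open Scope ring_scope.

Section Convolution.
Variables (S : Type) (add : S -> S -> S) (R : comNzRingType).

Lemma big_Permutation (T : Type) (F : T -> R) (l1 l2 : list T) :
  Permutation l1 l2 -> \sum_(p <- l1) F p = \sum_(p <- l2) F p.
Proof.
elim=> [|x l l' _ IH|x y l|l l' l'' _ IH1 _ IH2] //.
- by rewrite !big_cons IH.
- by rewrite !big_cons addrCA.
- by rewrite IH1.
Qed.

Lemma eq_big_In (T : Type) (F G : T -> R) (l : list T) :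
  (forall p, In p l -> F p = G p) -> \sum_(p <- l) F p = \sum_(p <- l) G p.
Proof.
elim: l => [|x l IH] FG; first by rewrite !big_nil.
by rewrite !big_cons FG ?IH //; [move=> p lp; apply: FG; right | left].
Qed.

Lemma gps_mul_enum (f g : S -> R) s (L : list (S * S)) :
  NoDup L -> (forall p, In p L <-> pairs_of add f g s p) ->
  gps_mul add f g s = \sum_(p <- L) f p.1 * g p.2.
Proof.
move=> L_uniq L_pairs; rewrite /gps_mul.
case: excluded_middle_informative => [H|[]]; last by exists L.
case: constructive_indefinite_description => L' [L'_uniq L'_pairs] /=.
apply: big_Permutation; apply: NoDup_Permutation => // p.
by rewrite L_pairs L'_pairs.
Qed.

Lemma gps_mul_sum (f g : S -> R) s (L : list (S * S)) :
  NoDup L -> (forall p, In p L -> add p.1 p.2 = s) ->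
  (forall p, pairs_of add f g s p -> In p L) ->
  gps_mul add f g s = \sum_(p <- L) f p.1 * g p.2.
Proof.
move=> L_uniq L_sum L_pairs.
pose nz p := (f p.1 != 0) && (g p.2 != 0).
rewrite (@gps_mul_enum _ _ _ (List.filter nz L)).
- rewrite -[List.filter nz L]/(filter nz L) big_filter big_mkcond /=.
  apply: eq_bigr => p _; rewrite /nz.
  by case: eqP => [->|_]; case: eqP => [->|_] //=; rewrite ?mul0r ?mulr0.
- exact: NoDup_filter.
- move=> p; rewrite filter_In /nz; split.
    by case=> /L_sum sum_p /andP[/eqP f_p /eqP g_p].
  move=> pp; split; first exact: L_pairs.
  by case: pp => _ [/eqP f_p /eqP g_p]; apply/andP.
Qed.

Lemma gps_mul_single_support (f g : S -> R) u v :
  (forall x, f x <> 0 -> x = u) -> (forall x, g x <> 0 -> x = v) ->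
  gps_mul add f g (add u v) = f u * g v.
Proof.
move=> f_supp g_supp.
rewrite (@gps_mul_sum _ _ _ [:: (u, v)]) ?big_seq1 //.
- by constructor; [case | constructor].
- by move=> p [<-|[]].
- by case=> x y [_ [/f_supp /= -> /g_supp /= ->]]; left.
Qed.

End Convolution.

Section Cutoff.
Variables (S : Type) (add : S -> S -> S) (zero : S) (le : S -> S -> Prop).
Variables (R : comNzRingType) (w : S).

Definition monomial (u : S) : S -> R :=
  fun s => if excluded_middle_informative (s = u) then 1 else 0.

Lemma monomial_id u : monomial u u = 1.
Proof. by rewrite /monomial; case: excluded_middle_informative. Qed.

Lemma monomial_support u s : monomial u s <> 0 -> s = u.
Proof. by rewrite /monomial; case: excluded_middle_informative. Qed.

Lemma gps_support_sub (f g : S -> R) :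
  (forall s, g s <> 0 -> f s <> 0) -> gps le f -> gps le g.
Proof.
move=> gf [f_art f_nar]; split=> [[x Hx]|B Bg].
  by apply: f_art; exists x => n; have [/gf ? ?] := Hx n.
by apply: f_nar => s /Bg /gf.
Qed.

Lemma monomial_gps u : gps le (monomial u).
Proof.
split=> [[x Hx]|B B_supp _].
  have [/monomial_support x0 [_ neq]] := Hx 0%N; have [/monomial_support x1 _] := Hx 1%N.
  by apply: neq; rewrite x0 x1.
by exists [:: u] => s /B_supp /monomial_support ->; left.
Qed.

Definition rota_baxter_identity (P : (S -> R) -> S -> R) : Prop :=
  forall f g, gps le f -> gps le g ->
    gps_mul add (P f) (P g)
    = gps_add (gps_add (P (gps_mul add f (P g))) (P (gps_mul add (P f) g)))
              (gps_opp (P (gps_mul add f g))).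

Definition lt_indicator (s : S) : R :=
  if excluded_middle_informative (slt le s w) then 1 else 0.

Lemma cutoffE (f : S -> R) s : cutoff le w f s = lt_indicator s * f s.
Proof.
rewrite /cutoff /lt_indicator.
by case: excluded_middle_informative => _ /=; rewrite ?mul1r ?mul0r.
Qed.

Lemma cutoff_support (f : S -> R) s : cutoff le w f s <> 0 -> f s <> 0.
Proof. by rewrite cutoffE => Hs fs0; apply: Hs; rewrite fs0 mulr0. Qed.

Lemma cutoff_gps (f : S -> R) : gps le f -> gps le (cutoff le w f).
Proof. exact/gps_support_sub/cutoff_support. Qed.

Lemma cutoff_linear (a b : R) (f g : S -> R) :
  cutoff le w (gps_add (gps_scale a f) (gps_scale b g))
  = gps_add (gps_scale a (cutoff le w f)) (gps_scale b (cutoff le w g)).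
Proof.
by apply: functional_extensionality => s; rewrite /gps_add /gps_scale !cutoffE; ring.
Qed.

(* The Rota-Baxter identity for [cutoff le w] evaluated at [add u v] on the
   monomials [monomial u] and [monomial v]. *)
Definition indicator_rota_baxter : Prop :=
  forall u v, lt_indicator u * lt_indicator v
    = lt_indicator (add u v) * (lt_indicator u + lt_indicator v - 1).

Lemma lt_indicator_lt s : slt le s w -> lt_indicator s = 1.
Proof. by rewrite /lt_indicator; case: excluded_middle_informative. Qed.

Lemma lt_indicator_nlt s : ~ slt le s w -> lt_indicator s = 0.
Proof. by rewrite /lt_indicator; case: excluded_middle_informative. Qed.

Lemma indicator_rota_baxterP : indicator_rota_baxter <->
  (~ exists u v, [/\ ~ slt le u w, ~ slt le v w & slt le (add u v) w]) /\
  (~ exists u v, [/\ slt le u w, slt le v w & ~ slt le (add u v) w]).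
Proof.
split=> [Hind|[noA noB] u v].
  split=> [[u [v [u_nlt v_nlt uv_lt]]]|[u [v [u_lt v_lt uv_nlt]]]]; move: (Hind u v).
    rewrite (lt_indicator_nlt u_nlt) (lt_indicator_nlt v_nlt) (lt_indicator_lt uv_lt).
    rewrite mul0r mul1r add0r sub0r.
    by move/eqP; rewrite eq_sym oppr_eq0 oner_eq0.
  rewrite (lt_indicator_lt u_lt) (lt_indicator_lt v_lt) (lt_indicator_nlt uv_nlt).
  rewrite mul1r mul0r.
  by move/eqP; rewrite oner_eq0.
have [u_lt|u_nlt] := classic (slt le u w);
have [v_lt|v_nlt] := classic (slt le v w);
have [uv_lt|uv_nlt] := classic (slt le (add u v) w);
rewrite ?(lt_indicator_lt u_lt) ?(lt_indicator_nlt u_nlt)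
        ?(lt_indicator_lt v_lt) ?(lt_indicator_nlt v_nlt)
        ?(lt_indicator_lt uv_lt) ?(lt_indicator_nlt uv_nlt); try ring.
- by case: noB; exists u, v.
- by case: noA; exists u, v.
Qed.

Lemma rota_baxter_cutoff_indicator :
  rota_baxter_identity (cutoff le w) -> indicator_rota_baxter.
Proof.
move=> Hrb u v.
have := congr1 (fun h => h (add u v)) (Hrb _ _ (monomial_gps u) (monomial_gps v)).
have u_supp x : cutoff le w (monomial u) x <> 0 -> x = u.
  by move/cutoff_support/monomial_support.
have v_supp x : cutoff le w (monomial v) x <> 0 -> x = v.
  by move/cutoff_support/monomial_support.
rewrite /= /gps_add /gps_opp !cutoffE !gps_mul_single_support //;
  try exact: monomial_support.
by rewrite !cutoffE !monomial_id !mulr1 => ->; ring.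
Qed.

Lemma cutoff_rota_baxter (HS : strictly_ordered_monoid add zero le) :
  indicator_rota_baxter -> rota_baxter_identity (cutoff le w).
Proof.
move=> Hind f g f_gps g_gps; apply: functional_extensionality => s.
have [L [L_uniq L_pairs]] := finite_subset_enum (pairs_of_finite HS s f_gps g_gps).
have L_sum p : In p L -> add p.1 p.2 = s by move/L_pairs => [].
have L_sub (F G : S -> R) : (forall x, F x <> 0 -> f x <> 0) ->
    (forall x, G x <> 0 -> g x <> 0) -> forall p, pairs_of add F G s p -> In p L.
  by move=> Ff Gg p [sum_p [/Ff fp /Gg gp]]; apply/L_pairs.
rewrite /gps_add /gps_opp !cutoffE !(gps_mul_sum L_uniq L_sum);
  try (apply: L_sub => x //; exact: cutoff_support).
rewrite !mulr_sumr -sumrN -!big_split /=.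
apply: eq_big_In => p /L_sum <-; rewrite !cutoffE.
transitivity (lt_indicator p.1 * lt_indicator p.2 * (f p.1 * g p.2)); first ring.
by rewrite Hind; ring.
Qed.

End Cutoff.

Theorem proposition3p1 (R : comNzRingType) (S : Type) (add : S -> S -> S)
  (zero : S) (le : S -> S -> Prop)
  (HS : strictly_ordered_monoid add zero le) (w : S) :
  rota_baxter_gps add le (cutoff (R:=R) le w) <->
  (~ exists u v : S, [/\ ~ slt le u w, ~ slt le v w & slt le (add u v) w]) /\
  (~ exists u v : S, [/\ slt le u w, slt le v w & ~ slt le (add u v) w]).
Proof.
rewrite -(indicator_rota_baxterP add le R w); split.
  by case=> _ _ Hrb; apply: rota_baxter_cutoff_indicator.
move=> Hind; split.
- exact: cutoff_gps.
- by move=> a b f g _ _; apply: cutoff_linear.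
- exact: cutoff_rota_baxter HS Hind.
Qed.
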